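(* A set $F$ of pairs $(K,a)$ ($K$ a graph, $a\in\mathbb{Z}_2^{*V(K)}$, taken up to isomorphism) is a full graph fibration if and only if $F(K)$ is a normal subgroup of $\mathbb{Z}_2^{*V(K)}$ for every graph $K$ and, for every injective graph homomorphism $\iota\colon H\to K$ between any two graphs, $\iota(F(H))\subset F(K)$.
   Context: Graphs are finite, undirected, without multiple edges, loops allowed, considered up to isomorphism; $N_k$ is the edgeless graph on $k$ vertices. For a set $V$, $\mathbb{Z}_2^{*V}$ is the group generated by $V$ subject to $v^2=e$; a map $\phi\colon V\to V'$ induces a homomorphism $\mathbb{Z}_2^{*V}\to\mathbb{Z}_2^{*V'}$, also denoted $\phi$. Pairs are taken up to the equivalence $(K,a)\equiv(K',\phi(a))$ for isomorphisms $\phi\colon K\to K'$, and $F(K):=\{a\mid (K,a)\in F\}$. A vertex overlap of graphs $K,H$ is a subset $f\subset V(K)\times V(H)$ in which each vertex occurs at most once; $K\cup_fH$ is the quotient of $K\sqcup H$ identifying $v$ with $w$ for $(v,w)\in f$ (an edge between two vertices of the quotient iff there is one between some representatives); $f_K,f_H$ are the induced maps into $V(K\cup_fH)$. A graph fibration is such a set $F$ with $(N_0,e),(N_1,e)\in F$ and: (F1) each $F(K)$ is empty or a normal subgroup; (F2) $\phi(F(K))=F(K)$ for every automorphism $\phi$ of $K$; (F3) if $(K,a),(H,b)\in F$ and $f$ is a vertex overlap of $K,H$, then $(K\cup_fH,f_K(a)f_H(b))\in F$. It is full if $F(K)\ne\emptyset$ for every graph $K$. *)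

From mathcomp Require Import all_boot.
Set Implicit Arguments. Unset Strict Implicit. Unset Printing Implicit Defensive.

(** * The group Z_2^{*V}: reduced words over V (no two consecutive letters equal). *)
Section FreeInvolutions.
Variable V : finType.

Definition reduced (s : seq V) : bool := sorted (fun x y => x != y) s.

Definition cancel_cons (x : V) (s : seq V) : seq V :=
  if s is y :: t then (if x == y then t else x :: s) else [:: x].

(* free reduction using v^2 = e *)
Definition red (s : seq V) : seq V := foldr cancel_cons [::] s.

Lemma red_reduced s : reduced (red s).
Proof.
elim: s => [|x s IH] //=.
rewrite /cancel_cons; case E: (red s) => [|y t] //.
rewrite E in IH; case: eqP => [_|/eqP nxy].
  exact: path_sorted IH.
by rewrite /reduced /= nxy.
Qed.

Definition fp := {s : seq V | reduced s}.
Definition fp_of (s : seq V) : fp := exist _ (red s) (red_reduced s).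
Definition fp1 : fp := fp_of [::].
Definition fpmul (a b : fp) : fp := fp_of (sval a ++ sval b).
Definition fpinv (a : fp) : fp := fp_of (rev (sval a)).

Definition normal_subgroup (S : fp -> Prop) : Prop :=
  [/\ S fp1,
      (forall a b, S a -> S b -> S (fpmul a b)),
      (forall a, S a -> S (fpinv a)) &
      (forall g a, S a -> S (fpmul (fpmul g a) (fpinv g)))].
End FreeInvolutions.

Definition fpmap (V V' : finType) (phi : V -> V') (a : fp V) : fp V' :=
  fp_of (map phi (sval a)).

(** * Graphs: finite, undirected, loops allowed, no multiple edges. *)
Record graph := Graph {
  vert : finType;
  adj : rel vert;
  adj_sym : symmetric adj }.
Arguments adj : clear implicits.
Arguments adj_sym : clear implicits.

Definition edgeless (n : nat) : graph :=
  @Graph 'I_n (fun _ _ => false) (fun _ _ => erefl).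

Definition graph_hom (H K : graph) (f : vert H -> vert K) : Prop :=
  forall x y, adj H x y -> adj K (f x) (f y).

Definition graph_iso (H K : graph) (f : vert H -> vert K) : Prop :=
  bijective f /\ forall x y, adj K (f x) (f y) = adj H x y.

Definition pairset := forall K : graph, fp (vert K) -> Prop.

(* F is a set of isomorphism classes of pairs: (K,a) in F iff (K',phi a) in F *)
Definition iso_invariant (F : pairset) : Prop :=
  forall K K' (phi : vert K -> vert K'), graph_iso phi ->
    forall a, F K a <-> F K' (fpmap phi a).

Definition vertex_overlap (K H : graph) (f : {set vert K * vert H}) : Prop :=
  forall p q, p \in f -> q \in f -> (p.1 == q.1) = (p.2 == q.2).

Section Glue.
Variables (K H : graph) (f : {set vert K * vert H}).

Definition partner (w : vert H) : option (vert K) := [pick v | (v, w) \in f].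
Definition unmatched (w : vert H) : bool := partner w == None.

Definition glue_vert := (vert K + {w : vert H | unmatched w})%type.

Definition glueK (v : vert K) : glue_vert := inl v.

Definition glueH (w : vert H) : glue_vert :=
  match partner w as o return partner w = o -> glue_vert with
  | Some v => fun _ => inl v
  | None => fun e => inr (exist _ w (introT eqP e))
  end erefl.

Definition glue_adj (u u' : glue_vert) : bool :=
  [exists x : vert K, exists y : vert K,
      [&& glueK x == u, glueK y == u' & adj K x y]] ||
  [exists x : vert H, exists y : vert H,
      [&& glueH x == u, glueH y == u' & adj H x y]].

Lemma glue_adj_sym : symmetric glue_adj.
Proof.
move=> u u'; rewrite /glue_adj; congr orb;
apply/existsP/existsP => -[x /existsP[y /and3P[h1 h2 h3]]];
exists y; apply/existsP; exists x; by rewrite h1 h2 adj_sym h3.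
Qed.

Definition glue : graph := @Graph glue_vert glue_adj glue_adj_sym.
End Glue.

Definition graph_fibration (F : pairset) : Prop :=
  [/\ F (edgeless 0) (fp1 _), F (edgeless 1) (fp1 _),
      (* (F1) *)
      (forall K, (forall a, ~ F K a) \/ normal_subgroup (F K)),
      (* (F2) *)
      (forall K (phi : vert K -> vert K), graph_iso phi ->
         forall b, (exists2 a, F K a & b = fpmap phi a) <-> F K b) &
      (* (F3) *)
      (forall K H (f : {set vert K * vert H}), vertex_overlap f ->
         forall a b, F K a -> F H b ->
         F (glue f) (fpmul (fpmap (@glueK K H f) a) (fpmap (glueH f) b)))].

Definition full (F : pairset) : Prop := forall K, exists a, F K a.

Definition full_graph_fibration (F : pairset) : Prop :=
  graph_fibration F /\ full F.

From mathcomp Require Import all_boot.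
Set Implicit Arguments. Unset Strict Implicit. Unset Printing Implicit Defensive.

(* Gluing H onto K along the graph of an injective homomorphism iota identifies
   every vertex of H with its image, so K \cup_f H is isomorphic to K, the
   copy of H landing on iota(H). Hence (F3) with a = e, followed by isomorphism
   invariance, gives iota(F(H)) in F(K); normality of every F(K) is (F1) plus
   fullness. Conversely, automorphisms and the two canonical maps
   K, H -> K \cup_f H are injective homomorphisms, so (F2) and (F3) follow from
   monotonicity and closure of F(K \cup_f H) under products. *)

Section Reduction.
Variable V : finType.

Lemma red_id (s : seq V) : reduced s -> red s = s.
Proof.
elim: s => [|x t IH] //= red_xt.
have red_t : reduced t by case: t red_xt {IH} => //= y t /andP[].
rewrite IH //; case: t red_xt {IH red_t} => [|y t] //=.
by rewrite /reduced /= => /andP[/negbTE ->].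
Qed.

Lemma cancel_consK (x : V) (s : seq V) :
  reduced s -> cancel_cons x (cancel_cons x s) = s.
Proof.
rewrite /cancel_cons; case: s => [|y t]; first by rewrite /= ?eqxx.
case: (eqVneq x y) => [<-|_]; last by rewrite /= eqxx.
case: t => [|z t]; first by rewrite /= ?eqxx.
by rewrite /reduced /= => /andP[/negbTE ->].
Qed.

Lemma fp_of_val (a : fp V) : fp_of (sval a) = a.
Proof. by case: a => s rs; apply/val_inj; rewrite /= red_id. Qed.

Lemma fpmul1 (a : fp V) : fpmul (fp1 V) a = a.
Proof. exact: fp_of_val. Qed.
End Reduction.

Lemma red_map_red (V V' : finType) (phi : V -> V') (s : seq V) :
  red (map phi (red s)) = red (map phi s).
Proof.
elim: s => [|x s IH] //=; rewrite -IH.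
have := red_reduced s; case: (red s) => [|y t] //= red_yt.
case: (eqVneq x y) => [<-|_] //=.
by rewrite cancel_consK ?red_reduced.
Qed.

Section FpMap.
Variables U V W : finType.

Lemma fpmap_comp (g : V -> W) (h : U -> V) (a : fp U) :
  fpmap g (fpmap h a) = fpmap (g \o h) a.
Proof. by apply: val_inj; rewrite /= red_map_red map_comp. Qed.

Lemma eq_fpmap (g h : U -> V) : g =1 h -> fpmap g =1 fpmap h.
Proof. by move=> eq_gh a; rewrite /fpmap (eq_map eq_gh). Qed.

Lemma fpmap_id (a : fp U) : fpmap id a = a.
Proof. by rewrite /fpmap map_id fp_of_val. Qed.

Lemma fpmap1 (g : U -> V) : fpmap g (fp1 U) = fp1 V.
Proof. exact: val_inj. Qed.
End FpMap.

Section Glue.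
Variables (K H : graph) (f : {set vert K * vert H}).

Variant glueH_spec (w : vert H) : glue_vert f -> Type :=
  | GlueHMatched v of partner f w = Some v : glueH_spec w (inl v)
  | GlueHUnmatched (uw : unmatched f w) : glueH_spec w (inr (exist _ w uw)).

Lemma glueHP w : glueH_spec w (glueH f w).
Proof.
rewrite /glueH; move: (erefl (partner f w)).
by case: {2 3}(partner f w) => [v|] e; constructor.
Qed.

Lemma partner_mem w v : partner f w = Some v -> (v, w) \in f.
Proof. by rewrite /partner; case: pickP => // v' fv'w [<-]. Qed.

Lemma glueK_inj : injective (glueK f).
Proof. by move=> x y []. Qed.

Lemma glueH_inj : vertex_overlap f -> injective (glueH f).
Proof.
move=> overlap w w'.
case: glueHP => [v pw|uw]; case: glueHP => [v' pw'|uw'] // [] // eq_vv'.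
have := overlap _ _ (partner_mem pw) (partner_mem pw').
by rewrite /= eq_vv' eqxx => /esym/eqP.
Qed.

Lemma glueK_hom : @graph_hom K (glue f) (glueK f).
Proof.
move=> x y xy; apply/orP; left.
by apply/existsP; exists x; apply/existsP; exists y; rewrite !eqxx xy.
Qed.

Lemma glueH_hom : @graph_hom H (glue f) (glueH f).
Proof.
move=> x y xy; apply/orP; right.
by apply/existsP; exists x; apply/existsP; exists y; rewrite !eqxx xy.
Qed.
End Glue.

Section GlueAlongGraph.
Variables (H K : graph) (iota : vert H -> vert K).

Definition graph_set : {set vert K * vert H} := [set p | p.1 == iota p.2].

Lemma graph_set_overlap : injective iota -> vertex_overlap graph_set.
Proof. by move=> iota_inj p q; rewrite !inE => /eqP-> /eqP->; rewrite inj_eq. Qed.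

Lemma partner_graph_set w : partner graph_set w = Some (iota w).
Proof.
rewrite /partner; case: pickP => [v|]; first by rewrite inE /= => /eqP->.
by move/(_ (iota w)); rewrite inE /= eqxx.
Qed.

Lemma graph_set_matched (x : {w : vert H | unmatched graph_set w}) : False.
Proof. by case: x => w; rewrite /unmatched partner_graph_set. Qed.

(* The [inr] branch is unreachable (graph_set_matched); any value would do. *)
Definition unglue (u : glue_vert graph_set) : vert K :=
  match u with inl v => v | inr x => iota (sval x) end.

Lemma unglue_glueH w : unglue (glueH graph_set w) = iota w.
Proof. by case: glueHP => [v|//]; rewrite partner_graph_set => -[]. Qed.

Lemma unglue_iso : graph_hom iota -> @graph_iso (glue graph_set) K unglue.
Proof.
move=> iota_hom; split.
  by exists inl => // -[//|/graph_set_matched []].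
move=> [x|/graph_set_matched []] [y|/graph_set_matched []].
apply/idP/idP => [xy|]; first exact: glueK_hom.
case/orP => /existsP[x' /existsP[y' /and3P[/eqP ex /eqP ey x'y']]].
  by case: ex => <-; case: ey => <-.
move: (unglue_glueH x') (unglue_glueH y'); rewrite ex ey /= => -> ->.
exact: iota_hom.
Qed.
End GlueAlongGraph.

Definition hom_monotone (F : pairset) : Prop :=
  forall (H K : graph) (iota : vert H -> vert K),
    graph_hom iota -> injective iota ->
    forall b, F H b -> F K (fpmap iota b).

Lemma full_fibration_normal (F : pairset) :
  full_graph_fibration F -> forall K : graph, normal_subgroup (F K).
Proof.
move=> [[_ _ F1 _ _] Ffull] K.
by case: (F1 K) => // F_empty; case: (Ffull K) => a /F_empty.
Qed.

Lemma full_fibration_hom_monotone (F : pairset) :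
  iso_invariant F -> full_graph_fibration F -> hom_monotone F.
Proof.
move=> F_iso Ffib H K iota iota_hom iota_inj b Fb.
have [F1K _ _ _] := full_fibration_normal Ffib K.
have [[_ _ _ _ F3] _] := Ffib.
have := F3 _ _ _ (graph_set_overlap iota_inj) _ _ F1K Fb.
rewrite fpmap1 fpmul1 => /(F_iso _ _ _ (unglue_iso iota_hom)).
by rewrite fpmap_comp (eq_fpmap (@unglue_glueH _ _ iota)).
Qed.

Lemma hom_monotone_fibration (F : pairset) :
  (forall K : graph, normal_subgroup (F K)) -> hom_monotone F -> graph_fibration F.
Proof.
move=> Fnormal Fmono; split.
- by case: (Fnormal (edgeless 0)).
- by case: (Fnormal (edgeless 1)).
- by right.
- move=> K phi [[psi phiK psiK] adj_phi] b.
  have phi_hom : graph_hom phi by move=> x y; rewrite adj_phi.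
  have psi_hom : graph_hom psi by move=> x y xy; rewrite -adj_phi !psiK.
  split=> [[a Fa ->]|Fb]; first exact: Fmono (can_inj phiK) _ Fa.
  exists (fpmap psi b); first exact: Fmono (can_inj psiK) _ Fb.
  by rewrite fpmap_comp (eq_fpmap psiK) fpmap_id.
- move=> K H f overlap a b Fa Fb.
  have [_ Fmul _ _] := Fnormal (glue f).
  apply: Fmul.
    exact: Fmono (glueK_hom f) (@glueK_inj K H f) _ Fa.
  exact: Fmono (glueH_hom f) (glueH_inj overlap) _ Fb.
Qed.

Theorem proposition2p17 (F : pairset) (HF : iso_invariant F) :
  full_graph_fibration F <->
  ((forall K : graph, normal_subgroup (F K)) /\
   (forall (H K : graph) (iota : vert H -> vert K),
      graph_hom iota -> injective iota ->
      forall b, F H b -> F K (fpmap iota b))).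
Proof.
split=> [Ffib | [Fnormal Fmono]].
  split; [exact: full_fibration_normal | exact: full_fibration_hom_monotone].
split; first exact: hom_monotone_fibration.
by move=> K; exists (fp1 _); case: (Fnormal K).
Qed.
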